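(* Consider the linear model $Y = X\beta^{0} + \epsilon$ with a fixed design matrix $X\in\mathbb{R}^{n\times p}$, unknown $\beta^{0}\in\mathbb{R}^{p}$, and Gaussian noise $\epsilon\sim\mathcal{N}_{n}(0,\sigma_{0}^{2}I)$. Let $\Omega$ be a norm on $\mathbb{R}^{p}$, $\lambda>0$, and let $\hat\beta$ be a minimizer of $\beta\mapsto \|Y-X\beta\|_{n}^{2}+\lambda\Omega(\beta)$. Let $J$ be a non-trivial allowed set of $\Omega$, $\lambda_J>0$, and let $\hat C_J\in\mathbb{R}^{|J^{c}|\times|J|}$ be a minimizer of $$C\mapsto \|X_J - X_{J^{c}}C\|_{nuc} + \lambda_J\Xi(C),\qquad \Xi(C):=\sum_{j=1}^{|J|}\Omega(C_j).$$ Put $R:=X_J-X_{J^{c}}\hat C_J$ and assume $\|R\|_{nuc}\neq0$, that $\hat\Sigma_J:=R^{T}R/n$ is non-singular and that $T_J:=R^{T}X_J/n$ is invertible. Define $M:=\sqrt{n}\,\hat\Sigma_J^{-1/2}T_J$ and $\hat b_J:=\hat\beta_J+T_J^{-1}R^{T}(Y-X\hat\beta)/n$. Let $S_\star$ be an allowed set of $\Omega$ (in the paper, the oracle set of a sharp oracle inequality) and let $C_{S_\star}$ be a constant such that $\Omega(\beta_{S_\star^{c}})\le C_{S_\star}\,\Omega^{S_\star^{c}}(\beta_{S_\star^{c}})$ for all $\beta\in\mathbb{R}^p$. Then $$M(\hat b_J-\beta^{0}_J)/\sigma_0 = W + rem,$$ where $W\sim\mathcal{N}_{|J|}(0,I)$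 and $\|rem\|_\infty\le 2\sqrt{n}\,\lambda_J\,C_{S_\star}\,\Upsilon_{S_\star}(\hat\beta-\beta^{0})/\sigma_0$.
   Context: For $v\in\mathbb{R}^{n}$, $\|v\|_n^2:=\sum_{j=1}^n v_j^2/n$. For $J\subset\{1,\dots,p\}$ and $\beta\in\mathbb{R}^p$, $\beta_J$ denotes either $(\beta_j)_{j\in J}$ or the vector in $\mathbb{R}^p$ with entries $\beta_j1\{j\in J\}$, depending on context; $X_J$ is the submatrix of columns in $J$. $\|A\|_{nuc}$ is the nuclear norm (sum of singular values). For $C\in\mathbb{R}^{|J^{c}|\times|J|}$, $C_j\in\mathbb{R}^p$ is the $j$-th column of $C$ placed on coordinates $J^{c}$ and zero on $J$. A set $S\subset\{1,\dots,p\}$ is allowed (for $\Omega$) if there is a norm $\Omega^{S^{c}}$ on $\mathbb{R}^{|S^{c}|}$ with $\Omega(\beta_S)+\Omega^{S^{c}}(\beta_{S^{c}})\le\Omega(\beta)$ for all $\beta$; for each allowed $S$ such a norm is fixed and $\Upsilon_S(\beta):=\Omega(\beta_S)+\Omega^{S^{c}}(\beta_{S^{c}})$. *)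

From HB Require Import structures.
From mathcomp Require Import all_boot all_order all_algebra.
From mathcomp Require Import all_classical all_reals all_analysis.
Set Implicit Arguments. Unset Strict Implicit. Unset Printing Implicit Defensive.
Import Order.TTheory GRing.Theory Num.Theory.
Local Open Scope classical_set_scope.
Local Open Scope ring_scope.

Section Defs.
Context {R : realType}.

Definition is_norm (k : nat) (N : 'cV[R]_k -> R) : Prop :=
  [/\ forall x, 0 <= N x,
      forall x, N x = 0 -> x = 0,
      forall (a : R) x, N (a *: x) = `|a| * N x
    & forall x y, N (x + y) <= N x + N y].

Definition sqnorm_n (n : nat) (v : 'cV[R]_n) : R :=
  (\sum_(j < n) v j 0 ^+ 2) / n%:R.

Definition supnorm (k : nat) (v : 'cV[R]_k) : R :=
  \big[Num.max/0]_(i < k) `|v i 0|.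

(** beta_A as the vector (beta_j)_{j in A}, indexed by the enumeration of A *)
Definition restr (p : nat) (A : {set 'I_p}) (b : 'cV[R]_p) : 'cV[R]_#|A| :=
  \col_(k < #|A|) b (enum_val k) 0.

(** beta_A as the vector of R^p with entries beta_j 1{j in A} *)
Definition projS (p : nat) (A : {set 'I_p}) (b : 'cV[R]_p) : 'cV[R]_p :=
  \col_(i < p) (if i \in A then b i 0 else 0).

Definition ext (p : nat) (A : {set 'I_p}) (v : 'cV[R]_#|A|) : 'cV[R]_p :=
  \col_(i < p) \sum_(k < #|A| | enum_val k == i) v k 0.

Definition subcols (n p : nat) (A : {set 'I_p}) (X : 'M[R]_(n, p)) : 'M[R]_(n, #|A|) :=
  \matrix_(i < n, k < #|A|) X i (enum_val k).

Definition allowed_with (p : nat) (Om : 'cV[R]_p -> R) (S : {set 'I_p})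
  (OmS : 'cV[R]_#|~: S| -> R) : Prop :=
  is_norm OmS /\
  forall b : 'cV[R]_p, Om (projS S b) + OmS (restr (~: S) b) <= Om b.


Definition allowed (p : nat) (Om : 'cV[R]_p -> R) (S : {set 'I_p}) : Prop :=
  exists OmS, @allowed_with p Om S OmS.

Definition Upsilon (p : nat) (Om : 'cV[R]_p -> R) (S : {set 'I_p})
  (OmS : 'cV[R]_#|~: S| -> R) (b : 'cV[R]_p) : R :=
  Om (projS S b) + OmS (restr (~: S) b).


Definition is_psd (k : nat) (A : 'M[R]_k) : Prop :=
  A^T = A /\ forall x : 'cV[R]_k, 0 <= (x^T *m A *m x) 0 0.

(** the positive semidefinite square root A^{1/2} of A (the unique psd S
    with S S = A, when A is psd; 0 otherwise) *)
Definition psd_sqrt (k : nat) (A : 'M[R]_k) : 'M[R]_k :=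
  match pselect (exists S : 'M[R]_k, is_psd S /\ S *m S = A) with
  | left h => projT1 (cid h)
  | right _ => 0
  end.

(** nuclear norm ||A||_nuc = tr((A^T A)^{1/2}) = sum of singular values *)
Definition nucnorm (m k : nat) (A : 'M[R]_(m, k)) : R :=
  \tr (psd_sqrt (A^T *m A)).

(** univariate normal law N(m, v) with variance v >= 0 (point mass if v = 0) *)
Definition normal_law (m v : R) : set R -> \bar R :=
  if v == 0 then \d_m else normal_prob m (Num.sqrt v).

End Defs.

Arguments allowed_with {R p} Om S OmS.
Arguments Upsilon {R p} Om S OmS b.
Arguments restr {R p} A b.
Arguments projS {R p} A b.
Arguments ext {R p} A v.
Arguments subcols {R n p} A X.

(** a random vector Z : T -> R^k is N_k(mu, Sig): every linear combination
    a^T Z is a (measurable) real random variable with law N(a^T mu, a^T Sig a) *)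
Definition gaussian_vector {R : realType} (d : measure_display)
  (T : measurableType d) (P : probability T R) (k : nat)
  (Z : T -> 'cV[R]_k) (mu : 'cV[R]_k) (Sig : 'M[R]_k) : Prop :=
  forall a : 'cV[R]_k,
    measurable_fun setT (fun w => (a^T *m Z w) 0 0) /\
    forall B : set R, measurable B ->
      P ((fun w => (a^T *m Z w) 0 0) @^-1` B) =
      normal_law ((a^T *m mu) 0 0) ((a^T *m Sig *m a) 0 0) B.

(* The nuclear norm has the majorant 2 ||A||_nuc <= tr Y + tr (Y^-1 A^T A) for
   every invertible psd Y, with equality at Y = (A^T A)^(1/2).  Take for Y the
   matrix Z := sqrt n Sigma_J^(1/2), a psd square root of R^T R.  Moving one
   column of the minimiser C_J along a direction v and comparing with this
   majorant gives the first-order bound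
   |(Z^-1 R^T X_{J^c} v)_j| <= lambda_J Omega(v).
   Since M = Z^-1 R^T X_J, the debiasing correction cancels the X_J part of the
   error, which leaves
   M (b_J - beta0_J) / sigma0 = W - Z^-1 R^T X_{J^c} (betahat - beta0)_{J^c} / sigma0
   with W := Z^-1 R^T eps / sigma0.  Then W ~ N(0, I) because
   Z^-1 R^T R Z^-1 = I, and the remainder is bounded using the first-order
   bound together with
   Omega(beta_{J^c}) <= 2 Omega(beta) <= 2 C_S Upsilon_S(beta). *)

From HB Require Import structures.
From mathcomp Require Import all_boot all_order all_algebra.
From mathcomp Require Import all_classical all_reals all_analysis.
From mathcomp Require Import lra ring.
Set Implicit Arguments.
Unset Strict Implicit.
Unset Printing Implicit Defensive.
Import Order.TTheory GRing.Theory Num.Theory.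
Local Open Scope classical_set_scope.
Local Open Scope ring_scope.

Section PsdMatrices.
Context {R : realType}.

Lemma psd_sqrtP k (A : 'M[R]_k) :
  (exists S, is_psd S /\ S *m S = A) ->
  is_psd (psd_sqrt A) /\ psd_sqrt A *m psd_sqrt A = A.
Proof.
move=> hA; rewrite /psd_sqrt; case: pselect => [h|//].
by case: (cid h) => S [].
Qed.

Lemma psd_sqrt_eq0 k (A : 'M[R]_k) :
  ~ (exists S, is_psd S /\ S *m S = A) -> psd_sqrt A = 0.
Proof. by move=> hA; rewrite /psd_sqrt; case: pselect. Qed.

Lemma psd_scalemx k (c : R) (Y : 'M[R]_k) :
  0 <= c -> is_psd Y -> is_psd (c *: Y).
Proof.
move=> c0 [sY pY]; split; first by rewrite linearZ /= sY.
by move=> x; rewrite -scalemxAr -scalemxAl mxE mulr_ge0.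
Qed.

Lemma psd_invmx k (Y : 'M[R]_k) :
  is_psd Y -> Y \in unitmx -> is_psd (invmx Y).
Proof.
move=> [sY pY] uY; split; first by rewrite trmx_inv sY.
move=> x; have := pY (invmx Y *m x).
by rewrite trmx_mul trmx_inv sY -!mulmxA (mulmxA Y) mulmxV // mul1mx.
Qed.

Lemma mxtrace_psd_quad_ge0 k m (N : 'M[R]_(k, m)) (Y : 'M[R]_k) :
  is_psd Y -> 0 <= \tr (N^T *m Y *m N).
Proof.
move=> [_ pY]; apply: sumr_ge0 => i _.
have -> : (N^T *m Y *m N) i i = ((col i N)^T *m Y *m col i N) 0 0.
  rewrite !mxE; apply: eq_bigr => l _; rewrite !mxE; congr (_ * _).
  by apply: eq_bigr => q _; rewrite !mxE.
exact: pY.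
Qed.

Lemma mxtrace_psd_ge0 k (Y : 'M[R]_k) : is_psd Y -> 0 <= \tr Y.
Proof. by move/(mxtrace_psd_quad_ge0 1%:M); rewrite trmx1 mul1mx mulmx1. Qed.

Lemma mxtrace_psd_gram_ge0 m k (Y : 'M[R]_k) (A : 'M[R]_(m, k)) :
  is_psd Y -> 0 <= \tr (Y *m (A^T *m A)).
Proof.
move=> pY; rewrite mulmxA mxtrace_mulC mulmxA.
by have := mxtrace_psd_quad_ge0 A^T pY; rewrite trmxK.
Qed.

(* Expand [0 <= tr ((Z - Y) Y^-1 (Z - Y))]. *)
Lemma mxtrace_tangent k (Y Z : 'M[R]_k) :
  is_psd Y -> Y \in unitmx -> Z^T = Z ->
  2 * \tr Z <= \tr Y + \tr (invmx Y *m (Z *m Z)).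
Proof.
move=> pY uY sZ; have [sY _] := pY.
have := mxtrace_psd_quad_ge0 (Z - Y) (psd_invmx pY uY).
have -> : (Z - Y)^T = Z - Y by rewrite raddfB /= sY sZ.
rewrite mulmxBl !mulmxBr mulmxV // !mulmxBl !mul1mx.
rewrite -(mulmxA Z (invmx Y) Y) mulVmx // mulmx1 !raddfB /=.
rewrite -mulmxA mxtrace_mulC mulmxA; lra.
Qed.

Lemma nucnorm_tangent m k (A : 'M[R]_(m, k)) (Y : 'M[R]_k) :
  is_psd Y -> Y \in unitmx ->
  2 * nucnorm A <= \tr Y + \tr (invmx Y *m (A^T *m A)).
Proof.
move=> pY uY; rewrite /nucnorm.
have [/psd_sqrtP[[sS _] eS]|/psd_sqrt_eq0 ->] :=
  pselect (exists S, is_psd S /\ S *m S = A^T *m A).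
  by have := mxtrace_tangent pY uY sS; rewrite eS.
rewrite mxtrace0 mulr0 addr_ge0 //; first exact: mxtrace_psd_ge0.
exact: mxtrace_psd_gram_ge0 (psd_invmx pY uY).
Qed.

Lemma mxtrace_le_nucnorm m k (A : 'M[R]_(m, k)) (Z : 'M[R]_k) :
  is_psd Z -> Z \in unitmx -> Z *m Z = A^T *m A -> \tr Z <= nucnorm A.
Proof.
move=> pZ uZ eZ; have [sZ _] := pZ.
rewrite /nucnorm; set S := psd_sqrt (A^T *m A).
have [pS eS] : is_psd S /\ S *m S = A^T *m A by apply: psd_sqrtP; exists Z.
have uS : S \in unitmx.
  have : S *m S \in unitmx by rewrite eS -eZ unitmx_mul uZ.
  by rewrite unitmx_mul => /andP[].
have := mxtrace_tangent pS uS sZ.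
by rewrite eZ -eS mulKmx //; lra.
Qed.

Lemma scale_sqrt_invmx k m (c : R) (S : 'M[R]_k) (B : 'M[R]_(k, m)) :
  0 < c -> S \in unitmx ->
  Num.sqrt c *: (invmx S *m (c^-1 *: B)) = invmx (Num.sqrt c *: S) *m B.
Proof.
move=> c_gt0 uS; have sc0 : Num.sqrt c != 0 by rewrite gt_eqF ?sqrtr_gt0.
rewrite invmxZ ?unitmxZ ?unitfE // -scalemxAr -!scalemxAl scalerA.
congr (_ *: _); rewrite -[in c^-1](sqr_sqrtr (ltW c_gt0)) expr2 invfM mulrA.
by rewrite mulfV // mul1r.
Qed.

(* [nucnorm A != 0] certifies that [A^T A] has a psd square root; without one,
   [psd_sqrt] returns 0. *)
Lemma psd_sqrt_scale m k (A : 'M[R]_(m, k)) (c : R) :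
  0 < c -> nucnorm A != 0 -> c^-1 *: (A^T *m A) \in unitmx ->
  let S := psd_sqrt (c^-1 *: (A^T *m A)) in
  let Z := Num.sqrt c *: S in
  [/\ is_psd Z, Z \in unitmx, Z *m Z = A^T *m A &
      forall l (B : 'M[R]_(k, l)),
        Num.sqrt c *: (invmx S *m (c^-1 *: B)) = invmx Z *m B].
Proof.
move=> c_gt0 nA uA S Z.
have sc_gt0 : 0 < Num.sqrt c by rewrite sqrtr_gt0.
have scc : Num.sqrt c * Num.sqrt c = c by rewrite -expr2 sqr_sqrtr // ltW.
set S0 := psd_sqrt (A^T *m A).
have [pS0 eS0] : is_psd S0 /\ S0 *m S0 = A^T *m A.
  apply: psd_sqrtP; apply: contra_neqP nA => /psd_sqrt_eq0 hA.
  by rewrite /nucnorm hA mxtrace0.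
have [pS eS] : is_psd S /\ S *m S = c^-1 *: (A^T *m A).
  apply: psd_sqrtP; exists ((Num.sqrt c)^-1 *: S0); split.
    by apply: psd_scalemx; rewrite // invr_ge0 ltW.
  by rewrite -scalemxAl -scalemxAr scalerA eS0 -invfM scc.
have uS : S \in unitmx by move: uA; rewrite -eS unitmx_mul => /andP[].
have eZ : Z *m Z = A^T *m A.
  rewrite /Z -scalemxAl -scalemxAr scalerA eS scalerA scc mulfV ?scale1r //.
  by rewrite gt_eqF.
split=> //; first by apply: psd_scalemx; rewrite // ltW.
  by rewrite unitmxZ // unitfE gt_eqF.
by move=> l B; apply: scale_sqrt_invmx.
Qed.

End PsdMatrices.

Lemma mxtrace_gram_expand {R : comPzRingType} m k (W : 'M[R]_k) (A F : 'M[R]_(m, k))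
    (t : R) :
  W^T = W ->
  \tr (W *m ((A - t *: F)^T *m (A - t *: F))) =
  \tr (W *m (A^T *m A)) - 2 * (t * \tr (W *m (A^T *m F)))
  + t ^+ 2 * \tr (W *m (F^T *m F)).
Proof.
move=> sW.
have trFA : \tr (W *m (F^T *m A)) = \tr (W *m (A^T *m F)).
  by rewrite -mxtrace_tr !trmx_mul trmxK sW mxtrace_mulC mulmxA.
have -> : (A - t *: F)^T = A^T - t *: F^T by apply/matrixP => a b; rewrite !mxE.
rewrite mulmxBl !mulmxBr -!scalemxAl -!scalemxAr.
rewrite scalerA -expr2 !raddfB /= !linearZ /= trFA /GRing.scale /=; ring.
Qed.

Lemma normr_le_of_quadratic_bound {R : realFieldType} (g h c : R) :
  (forall t, t * g <= t ^+ 2 * h + `|t| * c) -> `|g| <= c.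
Proof.
move=> H.
have pos_bound g' : (forall t, 0 < t -> t * g' <= t ^+ 2 * h + t * c) -> g' <= c.
  move=> Hg; apply/ler_addgt0Pr => e e_gt0.
  have h1_gt0 : 0 < `|h| + 1 by rewrite ltr_wpDl.
  pose t := e / (`|h| + 1).
  have t_gt0 : 0 < t by rewrite divr_gt0.
  have te : t * (`|h| + 1) = e by rewrite mulfVK // gt_eqF.
  have := Hg t t_gt0; rewrite expr2 -mulrA -mulrDr ler_pM2l //.
  have : t * h <= t * `|h| by rewrite ler_pM2l // ler_norm.
  nra.
rewrite ler_norml; apply/andP; split; last first.
  by apply: pos_bound => t t_gt0; have := H t; rewrite gtr0_norm.
rewrite lerNl; apply: pos_bound => t t_gt0.
by have := H (- t); rewrite sqrrN normrN gtr0_norm // mulNr mulrN.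
Qed.

Definition col_penalty {R : realType} l k (N : 'cV[R]_l -> R)
    (C : 'M[R]_(l, k)) : R :=
  \sum_(j < k) N (col j C).

Section NuclearNormFirstOrder.
Context {R : realType} {m k l : nat}.
Variables (A : 'M[R]_(m, k)) (B : 'M[R]_(m, l)) (N : 'cV[R]_l -> R).
Hypothesis ND : forall x y, N (x + y) <= N x + N y.
Hypothesis NZ : forall a x, N (a *: x) = `|a| * N x.

Lemma col_mul_delta (v : 'cV[R]_l) (i j : 'I_k) :
  col i (v *m delta_mx 0 j) = (i == j)%:R *: v.
Proof.
apply/matrixP => a b; rewrite !mxE big_ord1 !mxE (ord1 b) eqxx /=.
by rewrite eq_sym mulrC.
Qed.

Lemma col_penalty_perturb (C : 'M[R]_(l, k)) (v : 'cV[R]_l) (j : 'I_k) t :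
  col_penalty N (C + t *: (v *m delta_mx 0 j)) <= col_penalty N C + `|t| * N v.
Proof.
rewrite /col_penalty (bigD1 j) // [X in _ <= X + _](bigD1 j) //= [leRHS]addrAC.
have colCt i : col i (C + t *: (v *m delta_mx 0 j)) = col i C + t *: col i (v *m delta_mx 0 j).
  by rewrite !colE mulmxDl -scalemxAl.
apply: lerD.
  by rewrite colCt col_mul_delta eqxx scale1r (le_trans (ND _ _)) ?NZ.
apply: ler_sum => i /negbTE ij.
by rewrite colCt col_mul_delta ij scale0r scaler0 addr0.
Qed.

Variables (lam : R) (C0 : 'M[R]_(l, k)) (Z : 'M[R]_k).
Hypothesis lam_ge0 : 0 <= lam.
Hypothesis C0_min : forall C,
  nucnorm (A - B *m C0) + lam * col_penalty N C0
  <= nucnorm (A - B *m C) + lam * col_penalty N C.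
Let Rm := A - B *m C0.
Hypotheses (pZ : is_psd Z) (uZ : Z \in unitmx) (eZ : Z *m Z = Rm^T *m Rm).

Lemma nucnorm_perturb_le (F : 'M[R]_(m, k)) t :
  2 * nucnorm (Rm - t *: F) <=
  2 * nucnorm Rm - 2 * (t * \tr (invmx Z *m (Rm^T *m F)))
  + t ^+ 2 * \tr (invmx Z *m (F^T *m F)).
Proof.
have [sZ _] := pZ.
have := nucnorm_tangent (Rm - t *: F) pZ uZ.
rewrite mxtrace_gram_expand ?trmx_inv ?sZ // -eZ mulKmx //.
have := mxtrace_le_nucnorm pZ uZ eZ; lra.
Qed.

Lemma nucnorm_pen_first_order (j : 'I_k) (v : 'cV[R]_l) :
  `|(invmx Z *m Rm^T *m B *m v) j 0| <= lam * N v.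
Proof.
pose D := v *m delta_mx 0 j; pose F := B *m D.
pose g := \tr (invmx Z *m (Rm^T *m F)); pose h := \tr (invmx Z *m (F^T *m F)).
have -> : (invmx Z *m Rm^T *m B *m v) j 0 = g.
  by rewrite /g /F /D !mulmxA mxtrace_mulC trace_mx11 -rowE [RHS]mxE.
apply: (@normr_le_of_quadratic_bound _ _ (h / 2)) => t.
have := C0_min (C0 + t *: D).
have -> : A - B *m (C0 + t *: D) = Rm - t *: F.
  by rewrite /Rm /F mulmxDr -scalemxAr opprD addrA.
have := nucnorm_perturb_le F t.
have := ler_wpM2l lam_ge0 (col_penalty_perturb C0 v j t).
rewrite -/g -/h mulrDr; nra.
Qed.

End NuclearNormFirstOrder.

Lemma gaussian_vector_mulmx {R : realType} (d : measure_display)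
    (T : measurableType d) (P : probability T R) k l (Z : T -> 'cV[R]_k)
    (mu : 'cV[R]_k) (Sig : 'M[R]_k) (K : 'M[R]_(l, k)) :
  gaussian_vector P Z mu Sig ->
  gaussian_vector P (fun w => K *m Z w) (K *m mu) (K *m Sig *m K^T).
Proof.
move=> GZ a; have [mZ lZ] := GZ (K^T *m a).
have aK z : a^T *m (K *m z) = (K^T *m a)^T *m z.
  by rewrite trmx_mul trmxK mulmxA.
have -> : (fun w => (a^T *m (K *m Z w)) 0 0) = (fun w => ((K^T *m a)^T *m Z w) 0 0).
  by apply: funext => w; rewrite aK.
split; first exact: mZ.
move=> B mB; rewrite (lZ B mB) aK.
by rewrite trmx_mul trmxK !mulmxA.
Qed.

Lemma whitening_cov {R : fieldType} n k (s : R) (Z : 'M[R]_k) (Rm : 'M[R]_(n, k)) :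
  s != 0 -> Z^T = Z -> Z \in unitmx -> Z *m Z = Rm^T *m Rm ->
  s^-1 *: (invmx Z *m Rm^T) *m (s ^+ 2 *: 1%:M) *m (s^-1 *: (invmx Z *m Rm^T))^T
  = 1%:M.
Proof.
move=> s0 sZ uZ eZ.
have KK : invmx Z *m Rm^T *m (invmx Z *m Rm^T)^T = 1%:M.
  rewrite trmx_mul trmxK trmx_inv sZ !mulmxA -(mulmxA _ Rm^T) -eZ.
  by rewrite mulmxA mulVmx // mul1mx mulmxV.
rewrite scalemx1 mul_mx_scalar [(_ *: (invmx Z *m Rm^T))^T]linearZ /=.
rewrite -scalemxAr -!scalemxAl KK !scalerA.
suff -> : s^-1 * s ^+ 2 / s = 1 by rewrite scale1r.
by field.
Qed.

Section CoordinateSubsets.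
Context {R : realType} {p : nat}.
Implicit Types (A : {set 'I_p}) (b c : 'cV[R]_p).

Lemma restrB A b c : restr A (b - c) = restr A b - restr A c.
Proof. by apply/matrixP => i j; rewrite !mxE. Qed.

Lemma extD A (u v : 'cV[R]_#|A|) : ext A (u + v) = ext A u + ext A v.
Proof.
apply/matrixP => i j; rewrite !mxE -big_split.
by apply: eq_bigr => k _; rewrite mxE.
Qed.

Lemma extZ A (a : R) (u : 'cV[R]_#|A|) : ext A (a *: u) = a *: ext A u.
Proof.
apply/matrixP => i j; rewrite !mxE mulr_sumr.
by apply: eq_bigr => k _; rewrite mxE.
Qed.

Lemma ext_restr A b : ext A (restr A b) = projS A b.
Proof.
apply/matrixP => i j; rewrite !mxE.
under eq_bigr => k _ do rewrite mxE.
rewrite -(big_enum_val_cond (A := mem A) (fun x => x == i) (fun x => b x 0)).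
case: (boolP (i \in A)) => iA.
  rewrite (bigD1 i) ?iA ?eqxx //= big1 ?addr0 // => x /andP[/andP[_ /eqP ->]].
  by rewrite eqxx.
by rewrite big1 // => x /andP[xA /eqP xi]; move: iA; rewrite -xi xA.
Qed.

Lemma projS_split A b : projS A b + projS (~: A) b = b.
Proof.
apply/matrixP => i j; rewrite !mxE inE (ord1 j).
by case: (i \in A); rewrite ?addr0 ?add0r.
Qed.

Lemma mulmx_subcols_split n A (X : 'M[R]_(n, p)) b :
  X *m b = subcols A X *m restr A b + subcols (~: A) X *m restr (~: A) b.
Proof.
apply/matrixP => i j; rewrite (ord1 j) !mxE (bigID (fun l => l \in A)) /=.
congr (_ + _).
  rewrite (big_enum_val (A := mem A) (fun l => X i l * b l 0)).
  by apply: eq_bigr => k _; rewrite !mxE.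
rewrite (eq_bigl (fun l => l \in ~: A)); last by move=> l; rewrite inE.
rewrite (big_enum_val (A := mem (~: A)) (fun l => X i l * b l 0)).
by apply: eq_bigr => k _; rewrite !mxE.
Qed.

End CoordinateSubsets.

Section NormFacts.
Context {R : realType} {k : nat} (N : 'cV[R]_k -> R).
Hypothesis hN : is_norm N.

Lemma is_norm_ge0 x : 0 <= N x.
Proof. by case: hN. Qed.

Lemma is_normD x y : N (x + y) <= N x + N y.
Proof. by case: hN. Qed.

Lemma is_normZ a x : N (a *: x) = `|a| * N x.
Proof. by case: hN. Qed.

Lemma is_normB x y : N (x - y) <= N x + N y.
Proof. by rewrite -[N y]mul1r -normrN1 -is_normZ scaleN1r is_normD. Qed.

End NormFacts.

Lemma supnorm_le {R : realType} k (v : 'cV[R]_k) (c : R) :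
  0 <= c -> (forall i, `|v i 0| <= c) -> supnorm v <= c.
Proof.
move=> c_ge0 hv; apply: (big_ind (fun y => y <= c)) => // x y hx hy.
by rewrite ge_max hx hy.
Qed.

Lemma supnormN {R : realType} k (v : 'cV[R]_k) : supnorm (- v) = supnorm v.
Proof. by apply: eq_bigr => i _; rewrite mxE normrN. Qed.

Section AllowedSets.
Context {R : realType} {p : nat} (Om : 'cV[R]_p -> R).
Hypothesis hOm : is_norm Om.

Lemma allowed_projC_le (J : {set 'I_p}) b :
  allowed Om J -> Om (projS (~: J) b) <= 2 * Om b.
Proof.
move=> [OmJ [hOmJ allJ]].
have -> : projS (~: J) b = b - projS J b.
  by rewrite -{2}(projS_split J b) addrAC subrr add0r.
have := is_normB hOm b (projS J b); have := allJ b.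
have := is_norm_ge0 hOmJ (restr (~: J) b); lra.
Qed.

Lemma norm_le_Upsilon (S : {set 'I_p}) OmS (CS : R) b :
  allowed_with Om S OmS -> 1 <= CS ->
  (forall b, Om (projS (~: S) b) <= CS * OmS (restr (~: S) b)) ->
  Om b <= CS * Upsilon Om S OmS b.
Proof.
move=> [hOmS _] CS1 hCS; rewrite /Upsilon.
have := is_normD hOm (projS S b) (projS (~: S) b); rewrite projS_split.
have := hCS b.
have : 0 <= (CS - 1) * Om (projS S b).
  by rewrite mulr_ge0 ?subr_ge0 ?(is_norm_ge0 hOm).
lra.
Qed.

Lemma debias_remainder_le k (J S : {set 'I_p}) OmS (CS lamJ s c : R)
    (G : 'M[R]_(k, #|~: J|)) (b : 'cV[R]_p) :
  allowed Om J -> allowed_with Om S OmS -> 1 <= CS ->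
  (forall b, Om (projS (~: S) b) <= CS * OmS (restr (~: S) b)) ->
  0 < s -> 1 <= c -> 0 <= lamJ ->
  (forall i v, `|(G *m v) i 0| <= lamJ * Om (ext (~: J) v)) ->
  supnorm (s^-1 *: (G *m restr (~: J) b)) <= 2 * c * lamJ * CS * Upsilon Om S OmS b / s.
Proof.
move=> allJ hS CS1 hCS s_gt0 c1 lamJ_ge0 hG.
have Om_le := norm_le_Upsilon b hS CS1 hCS.
have OmC_le := allowed_projC_le b allJ.
have bound_ge0 : 0 <= lamJ * (2 * (CS * Upsilon Om S OmS b)).
  by rewrite mulr_ge0 // mulr_ge0 // (le_trans (is_norm_ge0 hOm b)).
have -> : 2 * c * lamJ * CS * Upsilon Om S OmS b / s
    = s^-1 * (c * (lamJ * (2 * (CS * Upsilon Om S OmS b)))) by ring.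
apply: supnorm_le => [|i].
  by rewrite mulr_ge0 ?invr_ge0 ?(ltW s_gt0) // mulr_ge0 // (le_trans ler01 c1).
rewrite mxE normrM gtr0_norm ?invr_gt0 // ler_pM2l ?invr_gt0 //.
apply: le_trans (ler_peMl bound_ge0 c1); apply: (le_trans (hG i _)).
by rewrite ler_wpM2l // ext_restr (le_trans OmC_le) // ler_pM2l.
Qed.

End AllowedSets.

Lemma mulmx_debias {R : fieldType} n k l (c : R) (L : 'M[R]_k)
    (Rm XJ : 'M[R]_(n, k)) (XJc : 'M[R]_(n, l)) (u : 'cV[R]_k) (v : 'cV[R]_l)
    (e : 'cV[R]_n) :
  c != 0 -> c *: (Rm^T *m XJ) \in unitmx ->
  L *m (Rm^T *m XJ) *m
    (u + invmx (c *: (Rm^T *m XJ)) *m (c *: (Rm^T *m (e - (XJ *m u + XJc *m v)))))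
  = L *m Rm^T *m (e - XJc *m v).
Proof.
move=> c0 uT; have uQ : Rm^T *m XJ \in unitmx by move: uT; rewrite unitmxZ ?unitfE.
rewrite invmxZ // -scalemxAl -scalemxAr scalerA mulVf // scale1r.
rewrite mulmxDr (mulmxA _ (invmx _)) mulmxK //.
rewrite !(mulmxBr, mulmxDr, mulmxN) !mulmxA.
by rewrite opprD addrCA addNKr.
Qed.

Theorem theorem2 (R : realType) (d : measure_display) (T : measurableType d)
  (P : probability T R) (n p : nat) (X : 'M[R]_(n, p)) (beta0 : 'cV[R]_p)
  (sigma0 : R) (eps : T -> 'cV[R]_n) (Y : T -> 'cV[R]_n)
  (Om : 'cV[R]_p -> R) (lam : R) (betahat : T -> 'cV[R]_p)
  (J : {set 'I_p}) (lamJ : R) (Chat : 'M[R]_(#|~: J|, #|J|))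
  (Sstar : {set 'I_p}) (OmSc : 'cV[R]_#|~: Sstar| -> R) (CS : R) :
  (0 < n)%N -> 0 < sigma0 ->
  gaussian_vector P eps 0 (sigma0 ^+ 2 *: 1%:M) ->
  (forall w, Y w = X *m beta0 + eps w) ->
  is_norm Om -> 0 < lam ->
  (forall w (b : 'cV[R]_p),
      sqnorm_n (Y w - X *m betahat w) + lam * Om (betahat w)
      <= sqnorm_n (Y w - X *m b) + lam * Om b) ->
  J != finset.set0 -> J != finset.setT -> allowed Om J -> 0 < lamJ ->
  (let Xi (C : 'M[R]_(#|~: J|, #|J|)) :=
     \sum_(j < #|J|) Om (ext (~: J) (col j C)) in
   forall C : 'M[R]_(#|~: J|, #|J|),
     nucnorm (subcols J X - subcols (~: J) X *m Chat) + lamJ * Xi Chat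
     <= nucnorm (subcols J X - subcols (~: J) X *m C) + lamJ * Xi C) ->
  let Rm := subcols J X - subcols (~: J) X *m Chat in
  nucnorm Rm != 0 ->
  let Sig := n%:R^-1 *: (Rm^T *m Rm) in
  Sig \in unitmx ->
  let TJ := n%:R^-1 *: (Rm^T *m subcols J X) in
  TJ \in unitmx ->
  let M := Num.sqrt n%:R *: (invmx (psd_sqrt Sig) *m TJ) in
  let bhat (w : T) := restr J (betahat w)
     + invmx TJ *m (n%:R^-1 *: (Rm^T *m (Y w - X *m betahat w))) in
  allowed_with Om Sstar OmSc ->
  1 <= CS ->
  (forall b : 'cV[R]_p,
      Om (projS (~: Sstar) b) <= CS * OmSc (restr (~: Sstar) b)) ->
  exists W : T -> 'cV[R]_#|J|,
    gaussian_vector P W 0 1%:M /\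
    forall w : T,
      supnorm (sigma0^-1 *: (M *m (bhat w - restr J beta0)) - W w)
      <= 2 * Num.sqrt n%:R * lamJ * CS
           * Upsilon Om Sstar OmSc (betahat w - beta0) / sigma0.
Proof.
move=> n_gt0 s_gt0 Geps HY hOm _ _ _ _ allJ lamJ_gt0 Chat_min Rm nucR Sig uSig TJ uTJ
  M bhat hS CS1 hCS.
have n_gt0' : (0 : R) < n%:R by rewrite ltr0n.
have [pZ uZ eZ eM] := psd_sqrt_scale n_gt0' nucR uSig.
set Z := Num.sqrt _ *: _ in pZ uZ eZ eM.
have ND x y : Om (ext (~: J) (x + y)) <= Om (ext (~: J) x) + Om (ext (~: J) y).
  by rewrite extD is_normD.
have NZ a x : Om (ext (~: J) (a *: x)) = `|a| * Om (ext (~: J) x).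
  by rewrite extZ is_normZ.
have kkt := nucnorm_pen_first_order ND NZ (ltW lamJ_gt0) Chat_min pZ uZ eZ.
pose K := sigma0^-1 *: (invmx Z *m Rm^T).
exists (fun w => K *m eps w); split.
  have := gaussian_vector_mulmx K Geps.
  by rewrite mulmx0 whitening_cov ?gt_eqF //; case: pZ.
move=> w; set dl := betahat w - beta0.
have eY : Y w - X *m betahat w = eps w
    - (subcols J X *m restr J dl + subcols (~: J) X *m restr (~: J) dl).
  by rewrite -mulmx_subcols_split HY /dl mulmxBr opprB addrAC addrC.
rewrite /bhat eY addrAC -restrB -/dl /M /TJ eM mulmx_debias ?invr_eq0 ?gt_eqF //.
rewrite mulmxBr scalerBr -scalemxAl addrAC subrr add0r !mulmxA supnormN.
apply: debias_remainder_le => //; last exact: ltW.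
by rewrite -[leLHS]sqrtr1 ler_sqrt // ler1n.
Qed.
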